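(* Let $\mathbb{K}$ be a field of characteristic zero, let $t\in\mathbb{K}\setminus\{0,1\}$, and let $\mathfrak{g}$ be a finite-dimensional non-perfect Lie algebra over $\mathbb{K}$ (i.e. $\mathfrak{g}^{(2)}\neq\mathfrak{g}$). Then there is an injective linear map from $\mathcal{D}(t,1,0)(\mathfrak{g})$ into the centroid $\mathcal{C}(\mathfrak{g})=\mathcal{D}(1,1,0)(\mathfrak{g})$ of $\mathfrak{g}$.
   Context: For a Lie algebra $\mathfrak{g}=(V,\mu)$, the derived algebra $\mathfrak{g}^{(2)}$ is the linear span of all products $\mu(X,Y)$. For $t\in\mathbb{K}$, $\mathcal{D}(t,1,0)(\mathfrak{g})$ denotes the space of linear maps $D:V\to V$ with $tD\mu(X,Y)=\mu(DX,Y)$ for all $X,Y\in V$; in particular the centroid is $\mathcal{D}(1,1,0)(\mathfrak{g})=\{D: D\mu(X,Y)=\mu(DX,Y)\ \forall X,Y\}$. *)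

From HB Require Import structures.
From mathcomp Require Import all_boot all_order all_algebra.
Set Implicit Arguments. Unset Strict Implicit. Unset Printing Implicit Defensive.
Import Order.TTheory GRing.Theory Num.Theory.
Local Open Scope ring_scope.

Section LieDefs.
Variables (K : fieldType) (V : vectType K).

Definition is_lie_bracket (mu : V -> V -> V) : Prop :=
  [/\ (forall (a : K) (x y z : V), mu (a *: x + y) z = a *: mu x z + mu y z),
      (forall (a : K) (x y z : V), mu x (a *: y + z) = a *: mu x y + mu x z),
      (forall x : V, mu x x = 0) &
      (forall x y z : V, mu x (mu y z) + mu y (mu z x) + mu z (mu x y) = 0)].

Definition in_derived (mu : V -> V -> V) (v : V) : Prop :=
  exists s : seq (K * V * V),
    v = \sum_(p <- s) p.1.1 *: mu p.1.2 p.2.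

Definition in_D_t10 (mu : V -> V -> V) (t : K) (D : 'End(V)) : Prop :=
  forall x y : V, t *: D (mu x y) = mu (D x) y.

Definition in_centroid (mu : V -> V -> V) (D : 'End(V)) : Prop :=
  in_D_t10 mu 1 D.

End LieDefs.

(** An element D of D(t,1,0) kills every double bracket: [[Dx,y],z] = 0.
  Indeed Jacobi applied inside D and Jacobi applied to (Dx, y, z) give two
  linear relations between the three cyclic double brackets of D, and t times
  the first minus the second is (t - 1) [[Dx,y],z].  Hence D maps the derived algebra g' into the centre.
  Let A be the dilation of ratio t along g' (the identity on a complement).
  Then D A [x,y] = t D [x,y] = [Dx,y], and [D A x, y] = [Dx, y] because
  D (A x - x) lies in D g', which is central; so D A is in the centroid.
  Since A is invertible, D |-> D A is an injective linear map. *)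

From HB Require Import structures.
From mathcomp Require Import all_boot all_order all_algebra.
From mathcomp Require Import ring.
Import GRing.Theory.
Set Implicit Arguments.
Unset Strict Implicit.
Local Open Scope ring_scope.

Section Dilation.
Variables (K : fieldType) (V : vectType K) (U : {vspace V}).

Definition dilv (s : K) : 'End(V) := (\1 + (s - 1) *: projv U)%VF.

Lemma dilvE s v : dilv s v = v + (s - 1) *: projv U v.
Proof. by rewrite add_lfunE scale_lfunE id_lfunE. Qed.

Lemma dilv_id s u : u \in U -> dilv s u = s *: u.
Proof.
by move=> Uu; rewrite dilvE projv_id // -{1}[u]scale1r -scalerDl addrC subrK.
Qed.

Lemma dilv1 : dilv 1 = \1%VF.
Proof. by rewrite /dilv subrr scale0r addr0. Qed.

Lemma dilvM r s : (dilv r \o dilv s)%VF = dilv (r * s).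
Proof.
apply/lfunP => v; rewrite comp_lfunE !dilvE linearD linearZ /= projv_proj.
rewrite -addrA; congr (v + _); set P := projv U v.
rewrite -{2}[P]scale1r -scalerDl scalerA -scalerDl; congr (_ *: _); ring.
Qed.

End Dilation.

Section RightComposition.
Variables (K : fieldType) (aT vT rT : vectType K).

Definition lfun_rcomp (A : 'Hom(aT, vT)) (D : 'Hom(vT, rT)) : 'Hom(aT, rT) :=
  (D \o A)%VF.

Fact lfun_rcomp_is_semilinear A : semilinear (lfun_rcomp A).
Proof.
by split=> [a D | D1 D2]; rewrite /lfun_rcomp (comp_lfunZl, comp_lfunDl).
Qed.

HB.instance Definition _ A :=
  GRing.isSemilinear.Build K 'Hom(vT, rT) 'Hom(aT, rT) _ (lfun_rcomp A)
    (lfun_rcomp_is_semilinear A).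

Lemma lfun_rcomp_inj (A : 'Hom(aT, vT)) (B : 'Hom(vT, aT)) :
  (A \o B = \1)%VF -> injective (lfun_rcomp A).
Proof.
move=> AB D1 D2 /(congr1 (fun D : 'Hom(aT, rT) => D \o B)%VF).
by rewrite /lfun_rcomp -!comp_lfunA AB !comp_lfun1r.
Qed.

End RightComposition.

Section LieBracket.
Variables (K : fieldType) (V : vectType K) (mu : V -> V -> V).
Hypothesis lie_mu : is_lie_bracket mu.

Lemma lieDl x y z : mu (x + y) z = mu x z + mu y z.
Proof. have [linl _ _ _] := lie_mu; by rewrite -[x]scale1r linl !scale1r. Qed.

Lemma lieDr x y z : mu x (y + z) = mu x y + mu x z.
Proof. have [_ linr _ _] := lie_mu; by rewrite -[y]scale1r linr !scale1r. Qed.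

Lemma lie0l z : mu 0 z = 0.
Proof. by apply: (addrI (mu 0 z)); rewrite -lieDl !addr0. Qed.

Lemma lie0r z : mu z 0 = 0.
Proof. by apply: (addrI (mu z 0)); rewrite -lieDr !addr0. Qed.

Lemma lieZl a x z : mu (a *: x) z = a *: mu x z.
Proof.
have [linl _ _ _] := lie_mu; by rewrite -[a *: x]addr0 linl lie0l addr0.
Qed.

Lemma lieZr a x z : mu x (a *: z) = a *: mu x z.
Proof.
have [_ linr _ _] := lie_mu; by rewrite -[a *: z]addr0 linr lie0r addr0.
Qed.

Lemma lie_suml I r (P : pred I) (F : I -> V) z :
  mu (\sum_(i <- r | P i) F i) z = \sum_(i <- r | P i) mu (F i) z.
Proof. exact: (big_morph (mu^~ z) (fun x y => lieDl x y z) (lie0l z)). Qed.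

Lemma lie_sumr I r (P : pred I) (F : I -> V) z :
  mu z (\sum_(i <- r | P i) F i) = \sum_(i <- r | P i) mu z (F i).
Proof. exact: (big_morph (mu z) (lieDr z) (lie0r z)). Qed.

Lemma lie_anticomm x y : mu x y = - mu y x.
Proof.
have [_ _ alt _] := lie_mu; apply/eqP; rewrite -addr_eq0.
by have := alt (x + y); rewrite lieDl !lieDr !alt add0r addr0 => ->.
Qed.

Lemma lie_jacobil x y z : mu (mu x y) z + mu (mu y z) x + mu (mu z x) y = 0.
Proof.
have [_ _ _ jacobi] := lie_mu; apply/eqP; rewrite -oppr_eq0 !opprD.
by rewrite -!lie_anticomm -addrA addrC jacobi.
Qed.

Definition derived_space : {vspace V} :=
  let B := vbasis (fullv : {vspace V}) in <<[seq mu x y | x <- B, y <- B]>>%VS.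

Lemma bracket_in_derived x y : mu x y \in derived_space.
Proof.
rewrite (coord_vbasis (memvf x)) (coord_vbasis (memvf y)) lie_suml.
apply: rpred_sum => i _; rewrite lieZl lie_sumr; apply: rpredZ.
apply: rpred_sum => j _; rewrite lieZr; apply/rpredZ/memv_span.
by apply: allpairs_f; apply: mem_nth; rewrite size_tuple.
Qed.

Lemma derived_space_ind (P : V -> Prop) :
  P 0 -> (forall a u v, P u -> P v -> P (a *: u + v)) ->
  (forall x y, P (mu x y)) -> forall u, u \in derived_space -> P u.
Proof.
move=> P0 P_comb P_bracket u /(@coord_span _ _ _ (in_tuple _)) ->.
apply: (big_ind P) => // [v w Pv Pw | i _].
  by rewrite -[v]scale1r; apply: P_comb.
rewrite -[_ *: _]addr0; apply: P_comb => //.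
by case/allpairsP: (mem_nth 0 (ltn_ord i)) => -[x y] [_ _ ->].
Qed.

End LieBracket.

Section TwistedDerivation.
Variables (K : fieldType) (V : vectType K) (mu : V -> V -> V).
Variables (t : K) (D : 'End(V)).
Hypotheses (lie_mu : is_lie_bracket mu) (D_t10 : in_D_t10 mu t D).

Lemma D_t10_bracketr x y : mu x (D y) = t *: D (mu x y).
Proof.
by rewrite lie_anticomm // -D_t10 (lie_anticomm _ y) // linearN scalerN opprK.
Qed.

Lemma D_t10_bracket2 x y z : mu (mu (D x) y) z = t *: (t *: D (mu (mu x y) z)).
Proof. by rewrite -D_t10 lieZl // D_t10. Qed.

Lemma D_t10_bracket_bracket0 x y z : t != 1 -> mu (mu (D x) y) z = 0.
Proof.
move=> t_neq1.
set q := mu (mu (D x) y) z; set r := mu (mu (D y) z) x.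
set p := mu (mu (D z) x) y.
have cyclic : q + r + p = 0.
  by rewrite /p /q /r !D_t10_bracket2 -!scalerDr -!linearD lie_jacobil // linear0 !scaler0.
have twisted : t *: p + q + t *: r = 0.
  have := congr1 (fun v => t *: v) (lie_jacobil lie_mu (D z) x y).
  by rewrite /= !scalerDr D_t10_bracketr -D_t10_bracket2 D_t10_bracketr D_t10 scaler0.
have q_opp : q = - (r + p) by apply/eqP; rewrite -addr_eq0 addrA cyclic.
have q_topp : q = - (t *: (r + p)).
  by apply/eqP; rewrite -addr_eq0 scalerDr (addrC (t *: r)) addrA (addrC q) twisted.
have : (t - 1) *: q = 0 by rewrite scalerBl scale1r {1}q_opp scalerN -q_topp subrr.
by move/eqP; rewrite scaler_eq0 subr_eq0 (negbTE t_neq1) => /eqP.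
Qed.

Lemma D_t10_derived_central u c :
  t != 0 -> t != 1 -> u \in derived_space mu -> mu (D u) c = 0.
Proof.
move=> t_neq0 t_neq1 Uu; move: u Uu c.
apply: (derived_space_ind (P := fun u => forall c, mu (D u) c = 0)).
- by move=> c; rewrite linear0 lie0l.
- by move=> a u v Pu Pv c; rewrite linearP lieDl // lieZl // Pu Pv scaler0 addr0.
move=> x y c; have := D_t10_bracket_bracket0 x y c t_neq1.
by rewrite -D_t10 lieZl // => /eqP; rewrite scaler_eq0 (negbTE t_neq0) => /eqP.
Qed.

Lemma D_t10_comp_dilv_centroid :
  t != 0 -> t != 1 -> in_centroid mu (D \o dilv (derived_space mu) t)%VF.
Proof.
move=> t_neq0 t_neq1 x y; rewrite scale1r !comp_lfunE.
rewrite dilv_id ?bracket_in_derived // linearZ /= D_t10 dilvE linearD linearZ /=.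
rewrite lieDl // lieZl // [mu (D (projv _ _)) _]D_t10_derived_central //.
  by rewrite scaler0 addr0.
exact: memv_proj.
Qed.

End TwistedDerivation.

Theorem theorem3p6 (K : fieldType) (V : vectType K) (mu : V -> V -> V) (t : K) :
  [pchar K] =i pred0 ->
  t != 0 -> t != 1 ->
  is_lie_bracket mu ->
  (exists v : V, ~ in_derived mu v) ->
  exists phi : 'Hom('End(V), 'End(V)),
    (forall D : 'End(V), in_D_t10 mu t D -> in_centroid mu (phi D)) /\
    (forall D1 D2 : 'End(V), in_D_t10 mu t D1 -> in_D_t10 mu t D2 ->
        phi D1 = phi D2 -> D1 = D2).
Proof.
move=> _ t_neq0 t_neq1 lie_mu _.
pose A := dilv (derived_space mu) t.
exists (linfun (lfun_rcomp A)); split=> [D D_t10 | D1 D2 _ _].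
  by rewrite lfunE; apply: D_t10_comp_dilv_centroid.
rewrite !lfunE.
apply: (@lfun_rcomp_inj _ _ _ _ A (dilv (derived_space mu) t^-1)).
by rewrite dilvM mulfV // dilv1.
Qed.
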